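(* Suppose sudoku flags $Z_1=(g_1,V_1)$ and $Z_2=(g_2,V_2)$, giving rise to orthogonal sudoku solutions with latin radix subsquares, possess data $(\Gamma _1, \beta _1)$ and $(\Gamma _2,\beta _2)$, respectively, with $\Gamma _i=\begin{pmatrix} a_i & b_i\\ c_i & d_i \end{pmatrix}$ for $i\in \{1,2\}$. Further, assume $\beta _1 - \beta _2$ and $b_1(d_2-\beta _2)-b_2(d_1-\beta _1)$ are nonzero. Then $$ g_{12}=V_1\cap V_2=\left[\begin{array}{c} I \\ \Gamma _{12} \end{array}\right], $$ where $\Gamma _{12}=\begin{pmatrix} a_{12} & b_{12} \\ c_{12} & d_{12} \end{pmatrix}$, and, with $D=b_1(d_2-\beta _2)-b_2(d_1-\beta _1)$, \begin{align*} a _{12}&=\frac{b_1b_2(c_1-c_2)+a_2b_1(d_2-\beta _2)-a_1b_2(d_1-\beta _1)}{D},\qquad b _{12}=\frac{b_1b_2(\beta _1-\beta _2)}{D},\\ c _{12}&=\frac{b_1c_1(d_2-\beta _2)-b_2c_2(d_1-\beta _1)+(a_2-a_1)(d_1-\beta _1)(d_2-\beta _2)}{D},\qquad d _{12}=\frac{\beta _1 b_1 (d_2-\beta _2)-\beta _2b_2(d_1-\beta _1)}{D}. \end{align*}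
   Context: Let $\mathbb F$ be the finite field of order $q$, with locations of order-$q^2$ sudoku solutions identified with $\mathbb F^4$ (coordinates: large row, row within large row, large column, column within large column). A sudoku flag is a pair $Z=(g,V)$ of subspaces of $\mathbb F^4$, $\dim g=2$, $\dim V=3$, $g\subset V$, with $g$ generating a linear sudoku solution (each symbol's locations form a coset of $g$; radix digits of symbols lie in cosets of $V$). Radix subsquares are the subsquares of the square of radix (base-$q$ leading) digits. It is known that such a flag gives a sudoku solution with latin radix subsquares iff $Z=(\langle (1,0,a,c),(0,1,b,d)\rangle,\langle (1,0,a,c),(0,1,b,d),(0,1,0,\beta)\rangle)$ with $b,\beta\neq0$ and $\Gamma=\begin{pmatrix} a&b\\c&d\end{pmatrix}$ nonsingular; $(\Gamma,\beta)$ is called the datum of $Z$. For $2\times 2$ matrices, $\left[\begin{array}{c} I\\ \Gamma\end{array}\right]$ denotes the subspace of $\mathbb F^4$ spanned by the columns of the $4\times 2$ matrix with $I$ (the $2\times 2$ identity) stacked above $\Gamma$. Two linear sudoku solutions generated by $g_1,g_2$ are orthogonal iff $g_1\cap g_2=\{0\}$. *)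

(* subspaces of F^4 are represented as row spaces of matrices
   (mxalgebra, scope %MS); vectors of F^4 are row vectors 'rV[F]_4. *)
From HB Require Import structures.
From mathcomp Require Import all_boot all_order all_algebra.
Set Implicit Arguments. Unset Strict Implicit. Unset Printing Implicit Defensive.
Import GRing.Theory.
Local Open Scope ring_scope.

Section SudokuDefs.
Variable F : fieldType.

Definition vec4 (x0 x1 x2 x3 : F) : 'rV[F]_4 :=
  \row_(j < 4) nth 0 [:: x0; x1; x2; x3] j.

Definition mx2 (a b c d : F) : 'M[F]_2 :=
  \matrix_(i < 2, j < 2)
     if (i : nat) == 0%N then (if (j : nat) == 0%N then a else b)
     else (if (j : nat) == 0%N then c else d).

(* [I ; G] : the subspace of F^4 spanned by the columns of the 4x2 matrix
   with I stacked above G (as a row space: rows are those columns) *)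
Definition stacked_span (G : 'M[F]_2) : 'M[F]_(2, 4) :=
  (col_mx (1%:M : 'M[F]_2) G)^T.

Definition flag_g (a b c d : F) : 'M[F]_(2, 4) :=
  col_mx (vec4 1 0 a c) (vec4 0 1 b d).

Definition flag_V (a b c d beta : F) : 'M[F]_(3, 4) :=
  col_mx (flag_g a b c d) (vec4 0 1 0 beta).

Definition has_datum (g V : 'M[F]_4) (a b c d beta : F) : Prop :=
  [/\ (g == flag_g a b c d)%MS, (V == flag_V a b c d beta)%MS,
      b != 0, beta != 0 & mx2 a b c d \in unitmx].

(* orthogonality of the linear sudoku solutions generated by g1, g2 *)
Definition orthogonal_g (g1 g2 : 'M[F]_4) : Prop := ((g1 :&: g2)%MS == (0 : 'M[F]_4)).

End SudokuDefs.

From HB Require Import structures.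
From mathcomp Require Import all_boot all_order all_algebra.
From mathcomp Require Import ring.
Import GRing.Theory.
Local Open Scope ring_scope.

(* V1 :&: V2 contains the plane g12 = [I; Gamma12]: each generator of g12 is
   the corresponding generator of g_i plus a multiple of
   (0, 0, b_i, d_i - beta_i) = (0, 1, b_i, d_i) - (0, 1, 0, beta_i), a vector of
   V_i; that one multiple fits both of the last two coordinates is a rational
   identity in the entries of Gamma12 with denominator D.  Conversely, V_i
   contains g_i and the planes g1, g2 are complementary, so V1 + V2 is all of
   F^4 and dim (V1 :&: V2) <= 3 + 3 - 4 = 2 = dim g12. *)

Section Flags.
Variable F : fieldType.

Lemma stacked_span_mx2 (a b c d : F) : stacked_span (mx2 a b c d) = flag_g a b c d.
Proof.
apply/matrixP => i j; rewrite !mxE.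
case: splitP => j' Hj; case: splitP => i' Hi; rewrite !mxE ?ord1 in Hi Hj *;
  by rewrite Hj; case: i Hi => [[|[|?]] ?] //= _; case: j' {Hj} => [[|[|?]] ?].
Qed.

Lemma vec4_comb (k : F) (x0 x1 x2 x3 y0 y1 y2 y3 : F) :
  vec4 x0 x1 x2 x3 + k *: vec4 y0 y1 y2 y3 =
  vec4 (x0 + k * y0) (x1 + k * y1) (x2 + k * y2) (x3 + k * y3).
Proof. by apply/rowP => j; rewrite !mxE; case: j => [[|[|[|[|]]]] ?]. Qed.

Lemma flag_g_sub m (W : 'M[F]_(m, 4)) (a b c d : F) :
  (flag_g a b c d <= W)%MS = (vec4 1 0 a c <= W)%MS && (vec4 0 1 b d <= W)%MS.
Proof. exact: (col_mx_sub (vec4 1 0 a c) (vec4 0 1 b d) W). Qed.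

Lemma flag_g_mul_pid (a b c d : F) : flag_g a b c d *m pid_mx 2 = 1%:M.
Proof.
apply/matrixP => i j; rewrite !mxE !big_ord_recr big_ord0 /= !mxE.
case: splitP => i' Hi; rewrite !mxE ord1 in Hi *; case: i Hi => [[|[|i]] ?] //= _;
  by case: j => [[|[|j]] ?] //=; ring.
Qed.

Lemma mxrank_flag_g (a b c d : F) : \rank (flag_g a b c d) = 2.
Proof.
apply/eqP; rewrite eqn_leq rank_leq_row /=.
by rewrite -[X in (X <= _)%N](mxrank1 F 2) -(flag_g_mul_pid a b c d) mxrankM_maxl.
Qed.

Lemma flag_g_comb_sub_flag_V (a b c d e lam mu : F) :
  (flag_g (a + lam * b) (b + mu * b) (c + lam * (d - e)) (d + mu * (d - e))
     <= flag_V a b c d e)%MS.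
Proof.
set V := flag_V a b c d e.
have /and3P[r1V r2V vV] :
    [&& vec4 1 0 a c <= V, vec4 0 1 b d <= V & vec4 0 1 0 e <= V]%MS.
  by rewrite andbA -flag_g_sub -col_mx_sub submx_refl.
have dirV : (vec4 0 0 b (d - e) <= V)%MS.
  rewrite (_ : vec4 _ _ _ _ = vec4 0 1 b d + (-1) *: vec4 0 1 0 e).
    exact: addmx_sub r2V (scalemx_sub _ vV).
  by rewrite vec4_comb; congr vec4; ring.
have comb_sub (u : 'rV_4) k :
    (u <= V -> (u + k *: vec4 0 0 b (d - e))%R <= V)%MS.
  by move=> uV; exact: addmx_sub uV (scalemx_sub _ dirV).
rewrite flag_g_sub.
have := comb_sub _ lam r1V; have := comb_sub _ mu r2V.
by rewrite !vec4_comb !mulr0 !addr0 => -> ->.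
Qed.

Lemma flag_g_sub_flag_V (a b c d e x y z w : F) : b != 0 ->
  z = c + (x - a) / b * (d - e) -> w = d + (y - b) / b * (d - e) ->
  (flag_g x y z w <= flag_V a b c d e)%MS.
Proof.
move=> bn0 -> ->.
have := flag_g_comb_sub_flag_V a b c d e ((x - a) / b) ((y - b) / b).
by rewrite !divfK // !subrKC.
Qed.

Lemma flag_g_sub_V (a b c d e : F) : (flag_g a b c d <= flag_V a b c d e)%MS.
Proof. by have := flag_g_comb_sub_flag_V a b c d e 0 0; rewrite !mul0r !addr0. Qed.

End Flags.

Lemma mxrank_cap_disjoint_subs {F : fieldType} {n m1 m2 m3 m4 : nat}
    {g1 : 'M[F]_(m1, n)} {g2 : 'M_(m2, n)} {V1 : 'M_(m3, n)} {V2 : 'M_(m4, n)} :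
  (g1 :&: g2)%MS = 0 -> (g1 <= V1)%MS -> (g2 <= V2)%MS ->
  (\rank g1 + \rank g2 + \rank (V1 :&: V2) <= \rank V1 + \rank V2)%N.
Proof.
move=> g12 g1V1 g2V2.
rewrite -(mxrank_sum_cap V1 V2) -(mxrank_disjoint_sum g12) leq_add2r.
exact/mxrankS/addsmxS.
Qed.

Theorem proposition4p8 (F : finFieldType) (g1 V1 g2 V2 : 'M[F]_4)
  (a1 b1 c1 d1 beta1 a2 b2 c2 d2 beta2 : F) :
  has_datum g1 V1 a1 b1 c1 d1 beta1 ->
  has_datum g2 V2 a2 b2 c2 d2 beta2 ->
  orthogonal_g g1 g2 ->
  beta1 - beta2 != 0 ->
  b1 * (d2 - beta2) - b2 * (d1 - beta1) != 0 ->
  let D := b1 * (d2 - beta2) - b2 * (d1 - beta1) in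
  let a12 := (b1 * b2 * (c1 - c2) + a2 * b1 * (d2 - beta2)
              - a1 * b2 * (d1 - beta1)) / D in
  let b12 := (b1 * b2 * (beta1 - beta2)) / D in
  let c12 := (b1 * c1 * (d2 - beta2) - b2 * c2 * (d1 - beta1)
              + (a2 - a1) * (d1 - beta1) * (d2 - beta2)) / D in
  let d12 := (beta1 * b1 * (d2 - beta2) - beta2 * b2 * (d1 - beta1)) / D in
  (V1 :&: V2 == stacked_span (mx2 a12 b12 c12 d12))%MS.
Proof.
(* beta1 != beta2 only makes b12 nonzero; the identity does not need it. *)
move=> [g1E V1E b1n0 _ _] [g2E V2E b2n0 _ _] /eqP g12 _ Dn0 /=.
rewrite stacked_span_mx2; set S := flag_g _ _ _ _.
have SV1 : (S <= V1)%MS.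
  by rewrite (eqmxP V1E) flag_g_sub_flag_V //; field; rewrite b1n0 Dn0.
have SV2 : (S <= V2)%MS.
  by rewrite (eqmxP V2E) flag_g_sub_flag_V //; field; rewrite b2n0 Dn0.
have SV12 : (S <= V1 :&: V2)%MS by rewrite sub_capmx SV1 SV2.
have rank_cap : (\rank (V1 :&: V2) <= 2)%N.
  have g1V1 : (g1 <= V1)%MS by rewrite (eqmxP g1E) (eqmxP V1E) flag_g_sub_V.
  have g2V2 : (g2 <= V2)%MS by rewrite (eqmxP g2E) (eqmxP V2E) flag_g_sub_V.
  have rV1 : (\rank V1 <= 3)%N by rewrite (eqmx_rank V1E) rank_leq_row.
  have rV2 : (\rank V2 <= 3)%N by rewrite (eqmx_rank V2E) rank_leq_row.
  have := leq_trans (mxrank_cap_disjoint_subs g12 g1V1 g2V2) (leq_add rV1 rV2).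
  by rewrite (eqmx_rank g1E) (eqmx_rank g2E) !mxrank_flag_g -(leq_add2l 4).
by rewrite andbC -(mxrank_leqif_eq SV12).2 eqn_leq mxrankS // mxrank_flag_g.
Qed.
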